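(* In the setting described in the context, for each $t\in(0,T_{max})$ and any $r\in(0,R)$ we have \[ -\frac{\mu R^n}{n}\,r^{1-n}\le v_r(r,t)\le\frac{\mu}{n}\,r,\qquad |v_r(r,t)|\le\frac{\|u(\cdot,t)\|_{L^\infty((0,R))}}{n}\,r,\qquad |v_{rr}(r,t)|\le\|u(\cdot,t)\|_{L^\infty((0,R))}. \]
   Context: Let $n\ge1$, $R>0$, $\Omega=B_R(0)\subset\mathbb{R}^n$, $\chi>0$, and let $u_0\in C^3(\bar\Omega)$ be radially symmetric and positive in $\bar\Omega$ with $\partial u_0/\partial\nu=0$ on $\partial\Omega$; let $\mu:=\frac{1}{|\Omega|}\int_\Omega u_0$. Let $T_{max}\in(0,\infty]$ and $(u,v)$ denote the maximally extended classical solution of the problem $u_t=\nabla\cdot\big(\frac{u\nabla u}{\sqrt{u^2+|\nabla u|^2}}\big)-\chi\nabla\cdot\big(\frac{u\nabla v}{\sqrt{1+|\nabla v|^2}}\big)$, $0=\Delta v-\mu+u$ in $\Omega\times(0,T_{max})$, $\big(\frac{u\nabla u}{\sqrt{u^2+|\nabla u|^2}}-\chi\frac{u\nabla v}{\sqrt{1+|\nabla v|^2}}\big)\cdot\nu=0$ on $\partial\Omega$, $u(\cdot,0)=u_0$; that is, $u\in C^{2,1}(\bar\Omega\times[0,T_{max}))$ and $v\in C^{2,0}(\bar\Omega\times[0,T_{max}))$ are the uniquely determined positive radially symmetric functions solving this problem classically, and $T_{max}$ is the maximal time of existence of this classical solution. By radial symmetry we write $u(r,t)$, $v(r,t)$ with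 $r=|x|\in(0,R)$, and subscripts $r$ denote radial derivatives. *)

From Stdlib Require Import Reals Lra.
From Coquelicot Require Import Coquelicot.
Open Scope R_scope.

(* Radially symmetric functions on B_R(0) x time are represented by their
   profiles f : R -> R -> R, f r t, extended evenly in r to [-R,R]. *)

Definition d_r (f : R -> R -> R) : R -> R -> R :=
  fun r t => Derive (fun s => f s t) r.
Definition d_t (f : R -> R -> R) : R -> R -> R :=
  fun r t => Derive (fun s => f r s) t.

Definition Qcl (Rr : R) (Tmax : Rbar) (p : R * R) : Prop :=
  - Rr <= fst p <= Rr /\ 0 <= snd p /\ Rbar_lt (snd p) Tmax.
Definition Qpos (Rr : R) (Tmax : Rbar) (p : R * R) : Prop :=
  - Rr <= fst p <= Rr /\ 0 < snd p /\ Rbar_lt (snd p) Tmax.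

Definition cont_on (D : R * R -> Prop) (f : R -> R -> R) : Prop :=
  forall p, D p ->
    filterlim (fun q : R * R => f (fst q) (snd q)) (within D (locally p))
              (locally (f (fst p) (snd p))).

Definition C21 (Rr : R) (Tmax : Rbar) (u : R -> R -> R) : Prop :=
  (forall r t, Qcl Rr Tmax (r, t) ->
     ex_derive (fun s => u s t) r /\ ex_derive (fun s => d_r u s t) r) /\
  cont_on (Qcl Rr Tmax) u /\ cont_on (Qcl Rr Tmax) (d_r u) /\
  cont_on (Qcl Rr Tmax) (d_r (d_r u)) /\
  (forall r t, Qpos Rr Tmax (r, t) -> ex_derive (fun s => u r s) t) /\
  cont_on (Qpos Rr Tmax) (d_t u).

Definition C20 (Rr : R) (Tmax : Rbar) (v : R -> R -> R) : Prop :=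
  (forall r t, Qcl Rr Tmax (r, t) ->
     ex_derive (fun s => v s t) r /\ ex_derive (fun s => d_r v s t) r) /\
  cont_on (Qcl Rr Tmax) v /\ cont_on (Qcl Rr Tmax) (d_r v) /\
  cont_on (Qcl Rr Tmax) (d_r (d_r v)).

(* radial component of the total flux
   u grad u / sqrt(u^2+|grad u|^2) - chi u grad v / sqrt(1+|grad v|^2) *)
Definition flux (chi : R) (u v : R -> R -> R) (r t : R) : R :=
  u r t * d_r u r t / sqrt (u r t ^ 2 + d_r u r t ^ 2)
  - chi * u r t * d_r v r t / sqrt (1 + d_r v r t ^ 2).

(* mean value of the radial function u0 over B_R(0) in R^n:
   mu = (1/|B_R|) int_{B_R} u0 = n R^{-n} int_0^R r^{n-1} u0(r) dr *)
Definition mean_radial (n : nat) (Rr : R) (u0 : R -> R) : R :=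
  INR n / Rr ^ n * RInt (fun r => r ^ (n - 1) * u0 r) 0 Rr.

Definition C3_on (Rr : R) (u0 : R -> R) : Prop :=
  (forall k r, (k <= 2)%nat -> - Rr <= r <= Rr -> ex_derive (Derive_n u0 k) r) /\
  (forall r, - Rr <= r <= Rr -> continuous (Derive_n u0 3) r).

Definition radial_classical_solution (n : nat) (Rr chi : R) (u0 : R -> R)
    (Tmax : Rbar) (u v : R -> R -> R) : Prop :=
  let mu := mean_radial n Rr u0 in
  (forall r t, u (- r) t = u r t /\ v (- r) t = v r t) /\
  C21 Rr Tmax u /\ C20 Rr Tmax v /\
  (forall r t, Qcl Rr Tmax (r, t) -> 0 < u r t /\ 0 < v r t) /\
  (* first equation, in divergence form: u_t = r^{1-n} (r^{n-1} F)_r *)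
  (forall r t, 0 < r < Rr -> 0 < t -> Rbar_lt t Tmax ->
     is_derive (fun s => s ^ (n - 1) * flux chi u v s t) r
               (r ^ (n - 1) * d_t u r t)) /\
  (forall r t, 0 < r < Rr -> 0 < t -> Rbar_lt t Tmax ->
     0 = d_r (d_r v) r t + INR (n - 1) / r * d_r v r t - mu + u r t) /\
  (forall t, 0 < t -> Rbar_lt t Tmax -> flux chi u v Rr t = 0) /\
  (forall r, - Rr <= r <= Rr -> u r 0 = u0 r).

Definition Linf_norm (Rr : R) (f : R -> R) : Rbar :=
  Lub_Rbar (fun y => exists r, 0 < r < Rr /\ y = Rabs (f r)).

From Stdlib Require Import Reals Lra Lia.
From Coquelicot Require Import Coquelicot.
Open Scope R_scope.

(* Put [n = k + 1].  Integrating [(r^k v_r)_r = r^k (mu - u)] from the centre gives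
   [r^k v_r = mu r^n / n - int_0^r s^k u], and the no-flux condition conserves
   [int_0^R s^k u(s,t) ds], so that [mu = n R^-n int_0^R s^k u(s,t) ds] at every time.
   As [0 <= int_0^r s^k u <= int_0^R s^k u], this gives the two-sided bound on [v_r];
   if [u <= K], then [int_0^r s^k u <= K r^n / n] and [mu <= K], whence
   [|v_r| <= K r / n], and the equation itself then gives [|v_rr| <= K]. *)

Definition clamp (Rr s : R) : R := Rmax (- Rr) (Rmin s Rr).

Lemma clamp_id Rr s : - Rr <= s <= Rr -> clamp Rr s = s.
Proof. intros. unfold clamp, Rmax, Rmin. repeat destruct Rle_dec; lra. Qed.

Lemma clamp_bounds Rr s : 0 <= Rr -> - Rr <= clamp Rr s <= Rr.
Proof. intros. unfold clamp, Rmax, Rmin. repeat destruct Rle_dec; lra. Qed.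

Lemma Rabs_clamp_sub_le Rr a b : 0 <= Rr -> Rabs (clamp Rr a - clamp Rr b) <= Rabs (a - b).
Proof.
  intros. unfold clamp, Rmax, Rmin.
  repeat destruct Rle_dec; unfold Rabs; repeat destruct Rcase_abs; lra.
Qed.

Lemma Rabs_Rmax0_sub_le a b : Rabs (Rmax 0 a - Rmax 0 b) <= Rabs (a - b).
Proof. unfold Rmax. repeat destruct Rle_dec; unfold Rabs; repeat destruct Rcase_abs; lra. Qed.

Lemma Rbar_lt_right_nbhd (x : R) (T : Rbar) : Rbar_lt x T ->
  exists d : posreal, forall a, a < x + d -> Rbar_lt a T.
Proof.
  destruct T as [T| |]; intros H; simpl in H.
  - assert (Hp : 0 < T - x) by lra. exists (mkposreal _ Hp). simpl. intros; simpl; lra.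
  - exists (mkposreal 1 Rlt_0_1). simpl; auto.
  - contradiction.
Qed.

Lemma Rbar_lt_le_trans_R (y t : R) (T : Rbar) : y <= t -> Rbar_lt t T -> Rbar_lt y T.
Proof. intros Hy Ht. destruct T; simpl in *; auto; lra. Qed.

Lemma locally_pos_Rbar_lt (x : R) (T : Rbar) : 0 < x -> Rbar_lt x T ->
  locally x (fun y => 0 < y /\ Rbar_lt y T).
Proof.
  intros Hx Ht. destruct (Rbar_lt_right_nbhd _ _ Ht) as [d Hd].
  assert (Hp : 0 < Rmin d x) by (apply Rmin_pos; [apply cond_pos|lra]).
  exists (mkposreal _ Hp). intros y Hy.
  change (Rabs (y - x) < Rmin d x) in Hy. apply Rabs_lt_between in Hy.
  pose proof (Rmin_l d x). pose proof (Rmin_r d x).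
  split; [lra|apply Hd; lra].
Qed.

Lemma locally_open_interval (a b x : R) : a < x < b -> locally x (fun y => a < y < b).
Proof.
  intros Hx.
  assert (Hp : 0 < Rmin (x - a) (b - x)) by (apply Rmin_pos; lra).
  exists (mkposreal _ Hp). intros y Hy.
  change (Rabs (y - x) < Rmin (x - a) (b - x)) in Hy. apply Rabs_lt_between in Hy.
  pose proof (Rmin_l (x - a) (b - x)). pose proof (Rmin_r (x - a) (b - x)). lra.
Qed.

Lemma continuity_pt_of_is_derive f x l : is_derive f x l -> continuity_pt f x.
Proof.
  intros H. apply continuity_pt_filterlim.
  apply (ex_derive_continuous (K := R_AbsRing) (V := R_NormedModule)). exists l. exact H.
Qed.

Lemma continuity_pt_pow k x : continuity_pt (fun y => y ^ k) x.
Proof.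
  exact (continuity_pt_of_is_derive _ _ _ (is_derive_pow (fun y => y) k x 1 (is_derive_id x))).
Qed.

Lemma continuity_pt_scal_pow c k x : continuity_pt (fun y => c * y ^ k) x.
Proof.
  apply (continuity_pt_mult (fun _ => c) (fun y => y ^ k)).
  - apply continuity_pt_const. intros a b; reflexivity.
  - apply continuity_pt_pow.
Qed.

Lemma Derive_even_0 f : (forall x, f (- x) = f x) -> ex_derive f 0 -> Derive f 0 = 0.
Proof.
  intros Hf [l Hl].
  assert (Hl' : is_derive (fun x => f (- x)) 0 (- l)).
  { replace (- l) with (scal (-1) l) by (unfold scal; simpl; unfold mult; simpl; ring).
    apply (is_derive_comp f (fun x => - x)).
    - rewrite Ropp_0. exact Hl.
    - auto_derive; [easy|ring]. }
  apply is_derive_ext with (g := f) in Hl'; [|intros; apply Hf].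
  pose proof (is_derive_unique _ _ _ Hl) as E1.
  pose proof (is_derive_unique _ _ _ Hl') as E2. lra.
Qed.

(* Unlike [is_RInt_derive], the derivative is only needed on the open interval. *)
Lemma RInt_open_derive (G g : R -> R) a b : a <= b ->
  (forall x, a < x < b -> is_derive G x (g x)) ->
  (forall x, a <= x <= b -> continuity_pt G x) ->
  (forall x, continuity_pt g x) ->
  RInt g a b = G b - G a.
Proof.
  intros Hab HG HGc Hgc.
  assert (HI : forall y, is_derive (fun y => RInt g a y) y (g y)).
  { intros y. apply (is_derive_RInt g (fun y => RInt g a y) a y).
    - apply filter_forall. intros z. apply (RInt_correct (V := R_CompleteNormedModule)).
      apply (ex_RInt_continuous (V := R_CompleteNormedModule)).
      intros w _. apply continuity_pt_filterlim, Hgc.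
    - apply continuity_pt_filterlim, Hgc. }
  destruct (MVT_gen (fun y => RInt g a y - G y) a b (fun _ => 0)) as [c [_ Hc]].
  - intros x Hx. rewrite Rmin_left, Rmax_right in Hx by lra.
    pose proof (is_derive_minus _ _ x _ _ (HI x) (HG x Hx)) as Hm.
    unfold minus, plus, opp in Hm; simpl in Hm.
    replace 0 with (g x + - g x) by ring. exact Hm.
  - intros x Hx. rewrite Rmin_left, Rmax_right in Hx by lra.
    apply continuity_pt_minus; [exact (continuity_pt_of_is_derive _ _ _ (HI x))|apply HGc; lra].
  - rewrite RInt_point in Hc. unfold zero in Hc; simpl in Hc. lra.
Qed.

Lemma RInt_scal_pow (c : R) (k : nat) (b : R) :
  RInt (fun s => c * s ^ k) 0 b = c * b ^ S k / INR (S k).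
Proof.
  assert (HN : 0 < INR (S k)) by (apply lt_0_INR; lia).
  apply is_RInt_unique.
  replace (c * b ^ S k / INR (S k)) with
    (c / INR (S k) * b ^ S k - c / INR (S k) * 0 ^ S k) by (rewrite pow_i by lia; field; lra).
  apply (is_RInt_derive (fun s => c / INR (S k) * s ^ S k)).
  - intros x _. auto_derive; [easy|].
    change (match k with 0%nat => 1 | S _ => INR k + 1 end) with (INR (S k)). field. lra.
  - intros x _. apply continuity_pt_filterlim, continuity_pt_scal_pow.
Qed.

Lemma cont_on_ball D f p : cont_on D f -> D p -> forall eps, 0 < eps ->
  exists delta, 0 < delta /\ forall q, D q -> Rabs (fst q - fst p) < delta ->
   Rabs (snd q - snd p) < delta -> Rabs (f (fst q) (snd q) - f (fst p) (snd p)) < eps.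
Proof.
  intros Hc Dp eps He.
  destruct (Hc p Dp (ball (f (fst p) (snd p)) (mkposreal eps He)) (locally_ball _ _))
    as [d Hd].
  exists d. split; [apply cond_pos|].
  intros q Dq H1 H2. apply (Hd q); [split; assumption|exact Dq].
Qed.

(* A function continuous relative to [D] yields a genuinely continuous one
   once composed with 1-Lipschitz maps [al], [be] into [D]. *)
Lemma continuity_2d_pt_of_cont_on D f (g : R -> R -> R) x y (al be : R -> R -> R)
    (d0 : posreal) :
  cont_on D f ->
  (forall a b, Rabs (a - x) < d0 -> Rabs (b - y) < d0 ->
     D (al a b, be a b) /\ g a b = f (al a b) (be a b)) ->
  (forall a b, Rabs (al a b - al x y) <= Rabs (a - x) + Rabs (b - y)) ->
  (forall a b, Rabs (be a b - be x y) <= Rabs (a - x) + Rabs (b - y)) ->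
  continuity_2d_pt g x y.
Proof.
  intros Hc Hg Ha Hb eps.
  assert (Hx : Rabs (x - x) < d0) by (rewrite Rminus_diag, Rabs_R0; apply cond_pos).
  assert (Hy : Rabs (y - y) < d0) by (rewrite Rminus_diag, Rabs_R0; apply cond_pos).
  destruct (Hg x y Hx Hy) as [D0 E0].
  destruct (cont_on_ball D f _ Hc D0 eps (cond_pos eps)) as [d [Hd Hq]].
  assert (Hm : 0 < Rmin d0 (d / 2)) by (apply Rmin_pos; [apply cond_pos|lra]).
  exists (mkposreal _ Hm). simpl. intros a b H1 H2.
  pose proof (Rmin_l d0 (d / 2)). pose proof (Rmin_r d0 (d / 2)).
  destruct (Hg a b) as [Da Ea]; try lra.
  rewrite Ea, E0. specialize (Ha a b). specialize (Hb a b).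
  apply (Hq (al a b, be a b) Da); simpl; lra.
Qed.

Lemma continuity_2d_pt_snd g x y :
  continuity_2d_pt g x y -> continuity_pt (fun b => g x b) y.
Proof.
  intros H. apply continuity_pt_locally. intros eps.
  destruct (H eps) as [d Hd]. exists d. intros b Hb.
  apply Hd; [rewrite Rminus_diag, Rabs_R0; apply cond_pos|exact Hb].
Qed.

Lemma continuity_2d_pt_pow_mul k (F : R -> R -> R) x y : continuity_2d_pt F x y ->
  continuity_2d_pt (fun a b => b ^ k * F a b) x y.
Proof.
  intros H. apply continuity_2d_pt_mult; [|exact H].
  apply (continuity_1d_2d_pt_comp (fun z => z ^ k) (fun a b => b)).
  - apply continuity_pt_pow.
  - apply continuity_2d_pt_id2.
Qed.

Lemma continuity_2d_pt_flux chi U DU DV x y :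
  continuity_2d_pt U x y -> continuity_2d_pt DU x y -> continuity_2d_pt DV x y ->
  0 < U x y ->
  continuity_2d_pt (fun a b => U a b * DU a b / sqrt (U a b ^ 2 + DU a b ^ 2)
     - chi * U a b * DV a b / sqrt (1 + DV a b ^ 2)) x y.
Proof.
  intros HU HD HV Hp.
  assert (Hsq : forall F, continuity_2d_pt F x y ->
                  continuity_2d_pt (fun a b => F a b ^ 2) x y).
  { intros F HF. apply (continuity_1d_2d_pt_comp (fun z => z ^ 2) F);
      [apply continuity_pt_pow|exact HF]. }
  assert (Hsqrt : forall F, continuity_2d_pt F x y -> 0 < F x y ->
                    continuity_2d_pt (fun a b => / sqrt (F a b)) x y).
  { intros F HF HF0. apply continuity_2d_pt_inv.
    - apply (continuity_1d_2d_pt_comp sqrt F); [apply continuity_pt_sqrt; lra|exact HF].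
    - apply Rgt_not_eq, sqrt_lt_R0, HF0. }
  apply continuity_2d_pt_minus.
  - apply continuity_2d_pt_mult; [apply continuity_2d_pt_mult; assumption|].
    apply (Hsqrt (fun a b => U a b ^ 2 + DU a b ^ 2)); [|nra].
    apply continuity_2d_pt_plus; apply Hsq; assumption.
  - apply continuity_2d_pt_mult.
    + apply continuity_2d_pt_mult; [|assumption].
      apply continuity_2d_pt_mult; [apply continuity_2d_pt_const|assumption].
    + apply (Hsqrt (fun a b => 1 + DV a b ^ 2)); [|nra].
      apply continuity_2d_pt_plus; [apply continuity_2d_pt_const|apply Hsq; assumption].
Qed.

Section ClampedProfiles.

Variables (Rr : R) (T : Rbar).
Hypothesis HRr : 0 <= Rr.
Hypothesis HT : Rbar_lt 0 T.

(* Clamping in [r] and truncating [t] at [0] extends a profile continuous on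
   [Qcl Rr T] to a function continuous on all of [R x R] near each [t < T]. *)
Lemma continuity_2d_pt_clamp_Qcl (F : R -> R -> R) (tau s : R) :
  Rbar_lt tau T -> cont_on (Qcl Rr T) F ->
  continuity_2d_pt (fun a b => F (clamp Rr b) (Rmax 0 a)) tau s.
Proof.
  intros Ht Hc.
  assert (Hm : Rbar_lt (Rmax 0 tau) T) by (unfold Rmax; destruct Rle_dec; auto).
  destruct (Rbar_lt_right_nbhd _ _ Hm) as [d0 Hd0].
  apply (continuity_2d_pt_of_cont_on (Qcl Rr T) F _ tau s
           (fun a b => clamp Rr b) (fun a b => Rmax 0 a) d0 Hc).
  - intros a b Ha Hb. split; [|reflexivity].
    split; [apply clamp_bounds; auto|split; [apply Rmax_l|apply Hd0]]. simpl.
    pose proof (Rabs_Rmax0_sub_le a tau). pose proof (Rle_abs (Rmax 0 a - Rmax 0 tau)). lra.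
  - intros a b. pose proof (Rabs_clamp_sub_le Rr b s HRr). pose proof (Rabs_pos (a - tau)). lra.
  - intros a b. pose proof (Rabs_Rmax0_sub_le a tau). pose proof (Rabs_pos (b - s)). lra.
Qed.

Lemma continuity_pt_clamp_slice (F : R -> R -> R) (t s : R) :
  0 <= t -> Rbar_lt t T -> cont_on (Qcl Rr T) F ->
  continuity_pt (fun s => F (clamp Rr s) t) s.
Proof.
  intros Ht HtT Hc.
  pose proof (continuity_2d_pt_snd _ _ _ (continuity_2d_pt_clamp_Qcl F t s HtT Hc)) as H.
  cbv beta in H. rewrite (Rmax_right 0 t) in H by exact Ht. exact H.
Qed.

Lemma continuity_2d_pt_clamp_Qpos (F : R -> R -> R) (tau s : R) :
  0 < tau -> Rbar_lt tau T -> cont_on (Qpos Rr T) F ->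
  continuity_2d_pt (fun a b => F (clamp Rr b) a) tau s.
Proof.
  intros H0 Ht Hc.
  destruct (locally_pos_Rbar_lt tau T H0 Ht) as [d1 Hd1].
  apply (continuity_2d_pt_of_cont_on (Qpos Rr T) F _ tau s
           (fun a b => clamp Rr b) (fun a b => a) d1 Hc).
  - intros a b Ha Hb. split; [|reflexivity].
    destruct (Hd1 a Ha) as [Ha0 HaT].
    split; [apply clamp_bounds; auto|split; assumption].
  - intros a b. pose proof (Rabs_clamp_sub_le Rr b s HRr). pose proof (Rabs_pos (a - tau)). lra.
  - intros a b. pose proof (Rabs_pos (b - s)). lra.
Qed.

End ClampedProfiles.

Section RadialPoisson.

Variables (k : nat) (Rr mu : R) (U W : R -> R).
Hypothesis HRr : 0 < Rr.
Hypothesis W_even : forall r, W (- r) = W r.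
Hypothesis W_C2 : forall r, - Rr <= r <= Rr -> ex_derive W r /\ ex_derive (Derive W) r.
Hypothesis U_cont : forall s, continuity_pt (fun s => U (clamp Rr s)) s.
Hypothesis U_pos : forall s, 0 < s < Rr -> 0 < U s.
Hypothesis W_eq : forall r, 0 < r < Rr ->
  0 = Derive (Derive W) r + INR k / r * Derive W r - mu + U r.

Let N := INR (S k).
Let m (r : R) : R := RInt (fun s => s ^ k * U (clamp Rr s)) 0 r.
Hypothesis mu_mass : mu = N / Rr ^ S k * m Rr.

Let N_pos : 0 < N. Proof. apply lt_0_INR; lia. Qed.

Lemma ex_RInt_weighted a b : ex_RInt (fun s => s ^ k * U (clamp Rr s)) a b.
Proof.
  apply (ex_RInt_continuous (V := R_CompleteNormedModule)). intros z _.
  apply continuity_pt_filterlim, (continuity_pt_mult (fun s => s ^ k)).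
  - apply continuity_pt_pow.
  - apply U_cont.
Qed.

Lemma weighted_mass_bounds r : 0 <= r <= Rr -> 0 <= m r <= m Rr.
Proof.
  intros Hr.
  assert (Hpos : forall a b, 0 <= a <= b -> b <= Rr ->
            0 <= RInt (fun s => s ^ k * U (clamp Rr s)) a b).
  { intros a b Hab HbR. apply RInt_ge_0; [lra|apply ex_RInt_weighted|].
    intros s Hs. rewrite clamp_id by lra.
    apply Rmult_le_pos; [apply pow_le; lra|left; apply U_pos; lra]. }
  unfold m. rewrite <- (RInt_Chasles _ 0 r Rr) by apply ex_RInt_weighted.
  pose proof (Hpos 0 r ltac:(lra) ltac:(lra)). pose proof (Hpos r Rr ltac:(lra) ltac:(lra)).
  unfold plus; simpl. lra.
Qed.

Lemma mu_nonneg : 0 <= mu.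
Proof.
  rewrite mu_mass. pose proof (weighted_mass_bounds Rr ltac:(lra)).
  apply Rmult_le_pos; [|lra]. apply Rlt_le, Rdiv_lt_0_compat; [exact N_pos|apply pow_lt; lra].
Qed.

(* Integrating [(r^k W')' = r^k (mu - U)] from the centre, where [r^k W'] vanishes. *)
Lemma radial_gradient_identity r : 0 < r < Rr ->
  r ^ k * Derive W r = mu / N * r ^ S k - m r.
Proof.
  intros Hr.
  assert (HW0 : Derive W 0 = 0).
  { apply Derive_even_0; [exact W_even|apply W_C2; lra]. }
  assert (E : RInt (fun s => - (s ^ k * U (clamp Rr s))) 0 r
              = (r ^ k * Derive W r - mu / N * r ^ S k) - (0 ^ k * Derive W 0 - mu / N * 0 ^ S k)).
  { apply (RInt_open_derive (fun s => s ^ k * Derive W s - mu / N * s ^ S k)); [lra| | |].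
    - intros s Hs. destruct (W_C2 s ltac:(lra)) as [_ HW2].
      pose proof (W_eq s ltac:(lra)) as Es.
      auto_derive; [exact HW2|].
      rewrite clamp_id by lra. unfold N in *. rewrite S_INR in *.
      apply (Rmult_eq_reg_r s); [|lra].
      change (match k with 0%nat => 1 | S _ => INR k + 1 end) with (INR (S k)).
      change (Derive (fun x => Derive W x) s) with (Derive (Derive W) s).
      replace (Derive (Derive W) s) with (mu - U s - INR k / s * Derive W s) by lra.
      rewrite S_INR. pose proof (pos_INR k).
      destruct k as [|j]; cbn [pred pow]; [rewrite INR_0|]; field; repeat split; lra.
    - intros s Hs. apply continuity_pt_minus.
      + apply (continuity_pt_mult (fun s => s ^ k) (Derive W)); [apply continuity_pt_pow|].
        destruct (W_C2 s ltac:(lra)) as [_ [l Hl]].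
        apply (continuity_pt_of_is_derive _ _ _ (Derive_correct _ _ (ex_intro _ l Hl))).
      + apply continuity_pt_scal_pow.
    - intros s. apply (continuity_pt_opp (fun s => s ^ k * U (clamp Rr s))).
      apply (continuity_pt_mult (fun s => s ^ k)); [apply continuity_pt_pow|apply U_cont]. }
  rewrite (RInt_opp (V := R_CompleteNormedModule)) in E by apply ex_RInt_weighted.
  rewrite HW0, Rmult_0_r, (pow_i (S k)) in E by lia. unfold opp in E; simpl in E. unfold m. simpl pow. lra.
Qed.

Lemma radial_gradient_formula r : 0 < r < Rr -> Derive W r = mu / N * r - m r / r ^ k.
Proof.
  intros Hr. pose proof (radial_gradient_identity r Hr) as E.
  assert (Hrk : 0 < r ^ k) by (apply pow_lt; lra).
  apply (Rmult_eq_reg_l (r ^ k)); [|lra].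
  rewrite E. simpl pow. field. lra.
Qed.

Lemma radial_gradient_bounds r : 0 < r < Rr ->
  - (mu * Rr ^ S k / N) * / r ^ k <= Derive W r <= mu / N * r.
Proof.
  intros Hr. rewrite radial_gradient_formula by exact Hr.
  assert (Hrk : 0 < / r ^ k) by (apply Rinv_0_lt_compat, pow_lt; lra).
  assert (HmR : mu * Rr ^ S k / N = m Rr).
  { rewrite mu_mass. pose proof N_pos. field. split; [apply pow_nonzero|]; lra. }
  assert (Hmu : 0 <= mu / N * r).
  { apply Rmult_le_pos; [|lra]. apply Rmult_le_pos; [apply mu_nonneg|].
    apply Rlt_le, Rinv_0_lt_compat, N_pos. }
  pose proof (weighted_mass_bounds r ltac:(lra)) as Hm.
  rewrite HmR. unfold Rdiv. split; [|nra].
  assert (m r * / r ^ k <= m Rr * / r ^ k) by (apply Rmult_le_compat_r; lra). lra.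
Qed.

Lemma radial_hessian_formula r : 0 < r < Rr ->
  Derive (Derive W) r = mu / N - U r + INR k * (m r / r ^ S k).
Proof.
  intros Hr. pose proof (W_eq r Hr) as E. rewrite radial_gradient_formula in E by exact Hr.
  assert (Hrk : 0 < r ^ k) by (apply pow_lt; lra).
  unfold N in *. rewrite S_INR in *. pose proof (pos_INR k).
  replace (INR k / r * (mu / (INR k + 1) * r - m r / r ^ k))
    with (mu - mu / (INR k + 1) - INR k * (m r / r ^ S k)) in E.
  - lra.
  - simpl pow. field. lra.
Qed.

Section UpperBound.

Variable K : R.
Hypothesis U_le : forall s, 0 < s < Rr -> U s <= K.

Lemma weighted_mass_le rho : 0 < rho <= Rr -> m rho <= K * rho ^ S k / N.
Proof.
  intros Hrho. unfold m, N. rewrite <- RInt_scal_pow.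
  apply RInt_le; [lra|apply ex_RInt_weighted| |].
  - apply (ex_RInt_continuous (V := R_CompleteNormedModule)). intros z _.
    apply continuity_pt_filterlim, continuity_pt_scal_pow.
  - intros s Hs. rewrite clamp_id, Rmult_comm by lra.
    apply Rmult_le_compat_r; [apply pow_le; lra|apply U_le; lra].
Qed.

Lemma mu_le : mu <= K.
Proof.
  pose proof (weighted_mass_le Rr ltac:(lra)) as H.
  assert (HR : 0 < Rr ^ S k) by (apply pow_lt; lra).
  rewrite mu_mass. apply (Rmult_le_reg_r (Rr ^ S k / N)); [apply Rdiv_lt_0_compat; lra|].
  replace (N / Rr ^ S k * m Rr * (Rr ^ S k / N)) with (m Rr) by (field; lra).
  replace (K * (Rr ^ S k / N)) with (K * Rr ^ S k / N) by (field; lra). exact H.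
Qed.

Lemma weighted_mean_le r : 0 < r < Rr -> m r / r ^ S k <= K / N.
Proof.
  intros Hr. pose proof (weighted_mass_le r ltac:(lra)). pose proof N_pos.
  assert (Hr1 : 0 < r ^ S k) by (apply pow_lt; lra).
  apply (Rmult_le_reg_r (r ^ S k)); [exact Hr1|].
  replace (m r / r ^ S k * r ^ S k) with (m r) by (field; lra).
  replace (K / N * r ^ S k) with (K * r ^ S k / N) by (field; lra). assumption.
Qed.

(* Both derivatives are affine in [q := m r / r^(k+1)] and [mu], which lie in
   [[0, K/N]] and [[0, K]]. *)
Lemma radial_bounds_of_upper_bound r : 0 < r < Rr ->
  Rabs (Derive W r) <= K * (r / N) /\ Rabs (Derive (Derive W) r) <= K.
Proof.
  intros Hr. pose proof N_pos.
  assert (Hr1 : 0 < r ^ S k) by (apply pow_lt; lra).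
  assert (Hq : 0 <= m r / r ^ S k <= K / N).
  { split; [|exact (weighted_mean_le r Hr)].
    apply Rdiv_le_0_compat; [apply weighted_mass_bounds; lra|exact Hr1]. }
  assert (EW : Derive W r = r * (mu / N - m r / r ^ S k)).
  { rewrite radial_gradient_formula by exact Hr. simpl pow. field.
    repeat split; try lra; apply pow_nonzero; lra. }
  assert (HmuN : 0 <= mu / N <= K / N).
  { pose proof mu_nonneg. pose proof mu_le.
    split; [apply Rdiv_le_0_compat|apply Rmult_le_compat_r; [left; apply Rinv_0_lt_compat|]]; lra. }
  assert (HkKN : INR k * (K / N) + K / N = K).
  { unfold N. rewrite S_INR. field. pose proof (pos_INR k). lra. }
  pose proof (U_pos r Hr). pose proof (U_le r Hr). pose proof (pos_INR k).
  split.
  - rewrite EW, Rabs_mult, (Rabs_pos_eq r) by lra.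
    replace (K * (r / N)) with (r * (K / N)) by (field; lra).
    apply Rmult_le_compat_l; [lra|]. apply Rabs_le. lra.
  - rewrite radial_hessian_formula by exact Hr. apply Rabs_le. nra.
Qed.

End UpperBound.

Lemma radial_Linf_bounds r : 0 < r < Rr ->
  Rbar_le (Rabs (Derive W r)) (Rbar_mult (Linf_norm Rr U) (r / N)) /\
  Rbar_le (Rabs (Derive (Derive W) r)) (Linf_norm Rr U).
Proof.
  intros Hr.
  assert (UB : forall s, 0 < s < Rr -> Rbar_le (Rabs (U s)) (Linf_norm Rr U)).
  { intros s Hs. apply (proj1 (Lub_Rbar_correct _)). exists s. split; auto. }
  generalize UB. destruct (Linf_norm Rr U) as [K| |]; intros UB'.
  - apply radial_bounds_of_upper_bound; [|exact Hr].
    intros s Hs. specialize (UB' s Hs). simpl in UB'. pose proof (Rle_abs (U s)). lra.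
  - assert (Hp : 0 < r / N) by (apply Rdiv_lt_0_compat; [lra|exact N_pos]).
    split; [|exact I].
    unfold Rbar_mult, Rbar_mult'. destruct (Rle_dec 0 (r / N)) as [H|H]; [|lra].
    destruct (Rle_lt_or_eq_dec 0 (r / N) H); [exact I|lra].
  - exfalso. exact (UB' r Hr).
Qed.

End RadialPoisson.

Section MassConservation.

Variables (k : nat) (Rr chi : R) (T : Rbar) (u v : R -> R -> R).
Hypothesis HRr : 0 < Rr.
Hypothesis HT : Rbar_lt 0 T.
Hypothesis uv_even : forall r t, u (- r) t = u r t /\ v (- r) t = v r t.
Hypothesis u_C21 : C21 Rr T u.
Hypothesis v_C20 : C20 Rr T v.
Hypothesis u_pos : forall r t, Qcl Rr T (r, t) -> 0 < u r t.
Hypothesis flux_eq : forall r t, 0 < r < Rr -> 0 < t -> Rbar_lt t T ->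
  is_derive (fun s => s ^ k * flux chi u v s t) r (r ^ k * d_t u r t).
Hypothesis flux_bc : forall t, 0 < t -> Rbar_lt t T -> flux chi u v Rr t = 0.

Let HRr0 : 0 <= Rr. Proof. lra. Qed.

Lemma Qcl_clamp_Rmax (a b : R) : Rbar_lt a T -> Qcl Rr T (clamp Rr b, Rmax 0 a).
Proof.
  intros Ha. unfold Qcl; simpl. split; [apply clamp_bounds, HRr0|split; [apply Rmax_l|]].
  unfold Rmax; destruct Rle_dec; auto.
Qed.

Lemma continuity_2d_pt_mass_density (a b : R) : Rbar_lt a T ->
  continuity_2d_pt (fun a b => b ^ k * u (clamp Rr b) (Rmax 0 a)) a b.
Proof.
  intros Ha. apply continuity_2d_pt_pow_mul.
  apply (continuity_2d_pt_clamp_Qcl Rr T HRr0 HT); [exact Ha|apply u_C21].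
Qed.

Lemma ex_RInt_mass_density (tau : R) : Rbar_lt tau T ->
  ex_RInt (fun s => s ^ k * u (clamp Rr s) (Rmax 0 tau)) 0 Rr.
Proof.
  intros Ht. apply (ex_RInt_continuous (V := R_CompleteNormedModule)).
  intros z _. apply continuity_pt_filterlim.
  exact (continuity_2d_pt_snd _ _ _ (continuity_2d_pt_mass_density tau z Ht)).
Qed.

(* At [r = 0] the weight [r ^ k] kills the flux when [k > 0], and by evenness
   both gradients in the flux vanish when [k = 0]. *)
Lemma weighted_flux_0 (t : R) : 0 <= t -> Rbar_lt t T -> 0 ^ k * flux chi u v 0 t = 0.
Proof.
  intros Ht HtT.
  destruct k as [|j]; [|simpl; ring].
  assert (Q : Qcl Rr T (0, t)) by (repeat split; simpl; auto; lra).
  destruct u_C21 as [u_dr _]. destruct v_C20 as [v_dr _].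
  assert (Du : d_r u 0 t = 0).
  { apply Derive_even_0; [intros x; apply uv_even|apply (u_dr 0 t Q)]. }
  assert (Dv : d_r v 0 t = 0).
  { apply Derive_even_0; [intros x; apply uv_even|apply (v_dr 0 t Q)]. }
  unfold flux. rewrite Du, Dv. unfold Rdiv. ring.
Qed.

Lemma RInt_weighted_dt_u_0 (x : R) : 0 < x -> Rbar_lt x T ->
  RInt (fun s => s ^ k * d_t u (clamp Rr s) x) 0 Rr = 0.
Proof.
  intros Hx HxT. destruct u_C21 as [_ [u_cont [ur_cont [_ [_ ut_cont]]]]].
  destruct v_C20 as [_ [_ [vr_cont _]]].
  rewrite (RInt_open_derive (fun s => s ^ k * flux chi u v (clamp Rr s) x));
    [| lra | | | ].
  - rewrite (clamp_id Rr Rr), (clamp_id Rr 0), flux_bc, weighted_flux_0 by first [assumption | lra].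
    change (Rr ^ k * 0 - 0 = 0). ring.
  - intros s Hs. apply (is_derive_ext_loc (fun y => y ^ k * flux chi u v y x)).
    + eapply filter_imp; [|apply (locally_open_interval (- Rr) Rr s); lra].
      intros y Hy. rewrite clamp_id; [reflexivity|lra].
    + rewrite clamp_id by lra. apply flux_eq; [lra|lra|exact HxT].
  - intros s _.
    pose proof (continuity_2d_pt_flux chi (fun a b => u (clamp Rr b) (Rmax 0 a))
      (fun a b => d_r u (clamp Rr b) (Rmax 0 a)) (fun a b => d_r v (clamp Rr b) (Rmax 0 a)) x s
      (continuity_2d_pt_clamp_Qcl Rr T HRr0 HT u x s HxT u_cont)
      (continuity_2d_pt_clamp_Qcl Rr T HRr0 HT (d_r u) x s HxT ur_cont)
      (continuity_2d_pt_clamp_Qcl Rr T HRr0 HT (d_r v) x s HxT vr_cont)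
      (u_pos _ _ (Qcl_clamp_Rmax x s HxT))) as H.
    apply (continuity_2d_pt_pow_mul k), continuity_2d_pt_snd in H.
    rewrite (Rmax_right 0 x) in H by lra. exact H.
  - intros s. apply (continuity_2d_pt_snd (fun a b => b ^ k * d_t u (clamp Rr b) a)).
    apply continuity_2d_pt_pow_mul, (continuity_2d_pt_clamp_Qpos Rr T); auto.
Qed.

Lemma mass_is_derive (x : R) : 0 < x -> Rbar_lt x T ->
  is_derive (fun tau => RInt (fun s => s ^ k * u (clamp Rr s) (Rmax 0 tau)) 0 Rr) x 0.
Proof.
  intros Hx HxT. destruct u_C21 as [_ [_ [_ [_ [ut_ex ut_cont]]]]].
  apply (is_derive_ext_loc (fun tau => RInt (fun s => s ^ k * u (clamp Rr s) tau) 0 Rr)).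
  { eapply filter_imp; [|apply (locally_pos_Rbar_lt x T Hx HxT)].
    intros z [Hz _]. rewrite (Rmax_right 0 z) by lra. reflexivity. }
  assert (E : RInt (fun s => Derive (fun z => s ^ k * u (clamp Rr s) z) x) 0 Rr = 0).
  { transitivity (RInt (fun s => s ^ k * d_t u (clamp Rr s) x) 0 Rr).
    - apply RInt_ext. intros s _. apply Derive_scal.
    - exact (RInt_weighted_dt_u_0 x Hx HxT). }
  refine (eq_ind _ (fun l => is_derive _ x l) _ _ E).
  apply (is_derive_RInt_param (fun tau s => s ^ k * u (clamp Rr s) tau)).
  - eapply filter_imp; [|apply (locally_pos_Rbar_lt x T Hx HxT)].
    intros y [Hy HyT] s _. apply ex_derive_scal, ut_ex.
    repeat split; try apply clamp_bounds; auto.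
  - intros s _. eapply continuity_2d_pt_ext;
      [|apply (continuity_2d_pt_pow_mul k (fun a b => d_t u (clamp Rr b) a));
        apply (continuity_2d_pt_clamp_Qpos Rr T); auto].
    intros a b. simpl. rewrite Derive_scal. reflexivity.
  - eapply filter_imp; [|apply (locally_pos_Rbar_lt x T Hx HxT)].
    intros y [Hy HyT]. pose proof (ex_RInt_mass_density y HyT) as H.
    rewrite (Rmax_right 0 y) in H by lra. exact H.
Qed.

Lemma mass_continuous_0 :
  continuity_pt (fun tau => RInt (fun s => s ^ k * u (clamp Rr s) (Rmax 0 tau)) 0 Rr) 0.
Proof.
  apply continuity_pt_locally. intros eps.
  assert (He : 0 < eps / (2 * Rr)) by (apply Rdiv_lt_0_compat; [apply cond_pos|lra]).
  destruct (uniform_continuity_2d_1d' (fun a b => b ^ k * u (clamp Rr b) (Rmax 0 a)) 0 Rr 0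
     (fun x _ => continuity_2d_pt_mass_density 0 x HT) (mkposreal _ He)) as [d Hd].
  destruct (Rbar_lt_right_nbhd 0 T HT) as [d1 Hd1].
  assert (Hp : 0 < Rmin d d1) by (apply Rmin_pos; apply cond_pos).
  exists (mkposreal _ Hp). intros y Hy. change (Rabs (y - 0) < Rmin d d1) in Hy.
  pose proof (Rmin_l d d1). pose proof (Rmin_r d d1).
  apply Rabs_lt_between in Hy.
  assert (HyT : Rbar_lt y T) by (apply Hd1; lra).
  rewrite <- (RInt_minus (V := R_CompleteNormedModule))
    by (apply ex_RInt_mass_density; assumption).
  eapply Rle_lt_trans.
  - apply abs_RInt_le_const; [lra| |].
    + apply (ex_RInt_minus (V := R_CompleteNormedModule)); apply ex_RInt_mass_density; auto.
    + intros s Hs. apply Rlt_le.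
      apply (Hd s 0 s y); simpl; try lra. rewrite Rminus_diag, Rabs_R0. apply cond_pos.
  - simpl. pose proof (cond_pos eps).
    replace ((Rr - 0) * (eps / (2 * Rr))) with (eps / 2) by (field; lra). lra.
Qed.

Lemma mass_conserved (t : R) : 0 < t -> Rbar_lt t T ->
  RInt (fun s => s ^ k * u (clamp Rr s) t) 0 Rr = RInt (fun s => s ^ k * u s 0) 0 Rr.
Proof.
  intros Ht HtT.
  destruct (MVT_gen (fun tau => RInt (fun s => s ^ k * u (clamp Rr s) (Rmax 0 tau)) 0 Rr)
              0 t (fun _ => 0)) as [c [_ Hc]].
  - intros y Hy. rewrite Rmin_left, Rmax_right in Hy by lra.
    apply mass_is_derive; [lra|apply (Rbar_lt_le_trans_R y t); auto; lra].
  - intros y Hy. rewrite Rmin_left, Rmax_right in Hy by lra.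
    destruct (Req_dec y 0) as [->|Hy0]; [exact mass_continuous_0|].
    apply (continuity_pt_of_is_derive _ _ 0), mass_is_derive;
      [lra|apply (Rbar_lt_le_trans_R y t); auto; lra].
  - cbv beta in Hc. rewrite (Rmax_right 0 t), (Rmax_left 0 0) in Hc by lra.
    rewrite <- (RInt_ext (fun s => s ^ k * u (clamp Rr s) 0) (fun s => s ^ k * u s 0));
      [lra|].
    intros s Hs. rewrite Rmin_left, Rmax_right in Hs by lra. rewrite clamp_id by lra.
    reflexivity.
Qed.

Lemma mean_radial_conserved (u0 : R -> R) (t : R) :
  (forall r, - Rr <= r <= Rr -> u r 0 = u0 r) -> 0 < t -> Rbar_lt t T ->
  mean_radial (S k) Rr u0
  = INR (S k) / Rr ^ S k * RInt (fun s => s ^ k * u (clamp Rr s) t) 0 Rr.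
Proof.
  intros Hinit Ht HtT. unfold mean_radial. replace (S k - 1)%nat with k by lia.
  rewrite (mass_conserved t Ht HtT). f_equal. apply RInt_ext. intros s Hs.
  rewrite Rmin_left, Rmax_right in Hs by lra. rewrite Hinit by lra. reflexivity.
Qed.

End MassConservation.

Theorem lemma2p5 (n : nat) (Rr chi : R) (u0 : R -> R) (Tmax : Rbar)
    (u v : R -> R -> R) :
  (1 <= n)%nat -> 0 < Rr -> 0 < chi ->
  (* initial datum: radial, C^3, positive on the closed ball, Neumann *)
  (forall r, u0 (- r) = u0 r) ->
  C3_on Rr u0 ->
  (forall r, - Rr <= r <= Rr -> 0 < u0 r) ->
  Derive u0 Rr = 0 ->
  Rbar_lt 0 Tmax ->
  radial_classical_solution n Rr chi u0 Tmax u v ->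
  forall t r, 0 < t -> Rbar_lt t Tmax -> 0 < r < Rr ->
    let mu := mean_radial n Rr u0 in
    - (mu * Rr ^ n / INR n) * / r ^ (n - 1) <= d_r v r t <= mu / INR n * r /\
    Rbar_le (Rabs (d_r v r t))
            (Rbar_mult (Linf_norm Rr (fun s => u s t)) (r / INR n)) /\
    Rbar_le (Rabs (d_r (d_r v) r t)) (Linf_norm Rr (fun s => u s t)).
Proof.
  intros Hn HRr _ _ _ _ _ HT Hsol t r Ht HtT Hr mu.
  destruct n as [|k]; [lia|].
  destruct Hsol as [Hev [HC21 [HC20 [Hpos [Hfl [Hveq [Hbc Hinit]]]]]]].
  replace (S k - 1)%nat with k in * by lia.
  assert (Qt : forall s, - Rr <= s <= Rr -> Qcl Rr Tmax (s, t))
    by (intros s Hs; repeat split; simpl; try lra; assumption).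
  assert (Hmass : mu = INR (S k) / Rr ^ S k * RInt (fun s => s ^ k * u (clamp Rr s) t) 0 Rr)
    by exact (mean_radial_conserved k Rr chi Tmax u v HRr HT Hev HC21 HC20
                (fun r t H => proj1 (Hpos r t H)) Hfl Hbc u0 t Hinit Ht HtT).
  assert (Hprofile : forall s, continuity_pt (fun s => u (clamp Rr s) t) s)
    by (intros s; apply (continuity_pt_clamp_slice Rr Tmax); first [lra | assumption | apply HC21]).
  pose (W := fun s => v s t).
  assert (HW : forall s, - Rr <= s <= Rr -> ex_derive W s /\ ex_derive (Derive W) s)
    by (intros s Hs; exact (proj1 HC20 s t (Qt s Hs))).
  assert (HWeven : forall s, W (- s) = W s) by (intros s; apply Hev).
  assert (Hupos : forall s, 0 < s < Rr -> 0 < u s t) by (intros s Hs; apply Hpos, Qt; lra).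
  assert (HWeq : forall s, 0 < s < Rr ->
            0 = Derive (Derive W) s + INR k / s * Derive W s - mu + u s t)
    by (intros s Hs; apply Hveq; assumption).
  split.
  - apply (radial_gradient_bounds k Rr mu (fun s => u s t) W); assumption.
  - apply (radial_Linf_bounds k Rr mu (fun s => u s t) W); assumption.
Qed.
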